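(* Let $n$ views be given, view $i$ containing $m_i$ items, and let $l=\sum_{i=1}^n m_i$. Let $\tilde P\in\{0,1\}^{l\times l}$ be a noisy aggregate association matrix (block $(i,j)$ is $\tilde P^i_j\in\{0,1\}^{m_i\times m_j}$, with $\tilde P^i_i=I$), let $\tilde C$ be the diagonal matrix whose $k$-th diagonal entry is the $k$-th row sum of $\tilde P$, let $\tilde L=\tilde C-\tilde P$, $\tilde P_{\mathrm{nrm}}=\tilde C^{-1/2}\tilde P\tilde C^{-1/2}$ and $\tilde L_{\mathrm{nrm}}=\tilde C^{-1/2}\tilde L\tilde C^{-1/2}$. Consider Problem 1: $$\max_{P^i_j\in\mathbb P}\ \langle P_{\mathrm{nrm}},\tilde P_{\mathrm{nrm}}\rangle\quad\text{subject to } P=VV^\top,\ V\in\mathbb V,$$ where $P$ is the aggregate matrix with blocks $P^i_j$, $C$ is the diagonal matrix of row sums of $P$, and $P_{\mathrm{nrm}}=C^{-1/2}PC^{-1/2}$. Then Problem 1 is equivalent to the program $$\min_{U\in\mathbb U}\ \mathrm{tr}\big(U^\top\tilde L_{\mathrm{nrm}}U\big),$$ where $\mathbb U=\{U: U=C^{-1/2}V,\ V\in\mathbb V\}$ (with $C$ the diagonal row-sum matrix of $VV^\top$), in the sense that $V$ is optimal for Problem 1 if and only if $U=C^{-1/2}V$ is optimal for the latter program; moreover every $U\in\mathbb U$ satisfies $U^\top U=I$.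
   Context: A partial permutation matrix is a $0/1$ matrix in which each row and each column contains at most one entry equal to $1$; $\mathbb P$ denotes the set of all such matrices. A lifting permutation matrix $P^i\in\{0,1\}^{m_i\times m}$ is a $0/1$ matrix each of whose rows contains exactly one entry equal to $1$ and each of whose columns contains at most one entry equal to $1$. $\mathbb V$ is the set of matrices $V=[P^{1\top}\ P^{2\top}\ \cdots\ P^{n\top}]^\top\in\{0,1\}^{l\times m}$ with each $P^i$ a lifting permutation matrix, where $m$ (the size of the universe) is the number of distinct items, so that every column of $V$ contains at least one entry equal to $1$. $\langle A,B\rangle=\mathrm{tr}(A^\top B)$ is the Frobenius inner product. *)

From HB Require Import structures.
From mathcomp Require Import all_boot all_order all_algebra.
Set Implicit Arguments. Unset Strict Implicit. Unset Printing Implicit Defensive.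
Import Order.TTheory GRing.Theory Num.Theory.
Local Open Scope ring_scope.

Section Defs.
Variable R : rcfType.

Definition is01 (x : R) : bool := (x == 0) || (x == 1).

Definition partial_perm_mx (p q : nat) (A : 'M[R]_(p, q)) : Prop :=
  (forall a b, is01 (A a b)) /\
  (forall a, #|[set b | A a b == 1%R]| <= 1)%N /\
  (forall b, #|[set a | A a b == 1%R]| <= 1)%N.

Definition lifting_perm_mx (p q : nat) (A : 'M[R]_(p, q)) : Prop :=
  (forall a b, is01 (A a b)) /\
  (forall a, #|[set b | A a b == 1%R]| = 1)%N /\
  (forall b, #|[set a | A a b == 1%R]| <= 1)%N.

Definition in_VV (n : nat) (msz : 'I_n -> nat) (m : nat)
    (V : 'M[R]_(\sum_(i < n) msz i, m)) : Prop :=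
  (forall i, lifting_perm_mx (submxcol V i)) /\
  (forall b, (0 < #|[set a | V a b == 1%R]|)%N).

Definition rowsum_diag (l : nat) (A : 'M[R]_l) : 'M[R]_l :=
  diag_mx (\row_a \sum_b A a b).

Definition rowsum_diag_invsqrt (l : nat) (A : 'M[R]_l) : 'M[R]_l :=
  diag_mx (\row_a (Num.sqrt (\sum_b A a b))^-1).

Definition nrm (l : nat) (A : 'M[R]_l) : 'M[R]_l :=
  rowsum_diag_invsqrt A *m A *m rowsum_diag_invsqrt A.

Definition lap_nrm (l : nat) (A : 'M[R]_l) : 'M[R]_l :=
  rowsum_diag_invsqrt A *m (rowsum_diag A - A) *m rowsum_diag_invsqrt A.

Definition frob (p q : nat) (A B : 'M[R]_(p, q)) : R := \tr (A^T *m B).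

Definition blocks_pp (n : nat) (msz : 'I_n -> nat)
    (P : 'M[R]_(\sum_(i < n) msz i)) : Prop :=
  forall i j, partial_perm_mx (submxblock P i j : 'M[R]_(msz i, msz j)).

Definition obj1 (n : nat) (msz : 'I_n -> nat) (m : nat)
    (Pt : 'M[R]_(\sum_(i < n) msz i)) (V : 'M[R]_(\sum_(i < n) msz i, m)) : R :=
  frob (nrm (V *m V^T)) (nrm Pt).

Definition feas1 (n : nat) (msz : 'I_n -> nat) (m : nat)
    (V : 'M[R]_(\sum_(i < n) msz i, m)) : Prop :=
  in_VV V /\ blocks_pp (V *m V^T).

Definition opt1 (n : nat) (msz : 'I_n -> nat) (m : nat)
    (Pt : 'M[R]_(\sum_(i < n) msz i)) (V : 'M[R]_(\sum_(i < n) msz i, m)) : Prop :=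
  feas1 V /\ forall V' : 'M[R]_(\sum_(i < n) msz i, m),
    feas1 V' -> obj1 Pt V' <= obj1 Pt V.

Definition U_of (l m : nat) (V : 'M[R]_(l, m)) : 'M[R]_(l, m) :=
  rowsum_diag_invsqrt (V *m V^T) *m V.

Definition in_UU (n : nat) (msz : 'I_n -> nat) (m : nat)
    (U : 'M[R]_(\sum_(i < n) msz i, m)) : Prop :=
  exists V : 'M[R]_(\sum_(i < n) msz i, m), in_VV V /\ U = U_of V.

Definition obj2 (n : nat) (msz : 'I_n -> nat) (m : nat)
    (Pt : 'M[R]_(\sum_(i < n) msz i)) (U : 'M[R]_(\sum_(i < n) msz i, m)) : R :=
  \tr (U^T *m lap_nrm Pt *m U).

Definition opt2 (n : nat) (msz : 'I_n -> nat) (m : nat)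
    (Pt : 'M[R]_(\sum_(i < n) msz i)) (U : 'M[R]_(\sum_(i < n) msz i, m)) : Prop :=
  in_UU U /\ forall U' : 'M[R]_(\sum_(i < n) msz i, m),
    in_UU U' -> obj2 Pt U <= obj2 Pt U'.

End Defs.

From HB Require Import structures.
From mathcomp Require Import all_boot all_order all_algebra.
Import Order.TTheory GRing.Theory Num.Theory.
Local Open Scope ring_scope.
Set Implicit Arguments. Unset Strict Implicit.

(* Every V in the set V is the indicator matrix of a map c sending each item
   to its element of the universe: c is onto (every column of V has a 1) and
   one-to-one on each view (the P^i are liftings).  So V V^T is the 0/1 matrix
   [c a = c a'], its blocks are partial permutations, its row sum at a is the
   size of the fibre of c through a, and the columns of U = C^{-1/2} V are the
   normalised indicators of the fibres, hence orthonormal.  By cyclicity of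
   the trace <P_nrm, P~_nrm> = tr (U^T P~_nrm U); as P~ has a unit diagonal its
   row sums are positive, L~_nrm = I - P~_nrm, and
   tr (U^T L~_nrm U) = m - <P_nrm, P~_nrm>: maximising one objective is
   minimising the other. *)

Section IndicatorMatrix.
Variable R : rcfType.

Definition indicator_mx (l m : nat) (c : 'I_l -> 'I_m) : 'M[R]_(l, m) :=
  \matrix_(a, b) (b == c a)%:R.

Lemma indicator_mxP (p q : nat) (A : 'M[R]_(p, q)) :
  (forall a b, is01 (A a b)) -> (forall a, #|[set b | A a b == 1%R]| = 1)%N ->
  exists c, A = indicator_mx c.
Proof.
move=> A01 row1.
have /fin_all_exists [c Ac] :
    forall a, exists c, [set b | A a b == 1] = [set c].
  by move=> a; apply/cards1P; rewrite row1.
exists c; apply/matrixP => a b; have /setP/(_ b) := Ac a; rewrite !inE !mxE.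
case: (b == c a) => /eqP; case/orP: (A01 a b) => /eqP ->;
  by rewrite ?oner_eq0 ?eqxx.
Qed.

Section Indicator.
Variables (l m : nat) (c : 'I_l -> 'I_m).

Lemma indicator_col_injective :
  (forall b, #|[set a | indicator_mx c a b == 1%R]| <= 1)%N -> injective c.
Proof.
move=> col1 a a' eq_c; have /card_le1_eqP := col1 (c a); apply;
  by rewrite inE mxE ?eq_c eqxx.
Qed.

Lemma indicator_col_surjective :
  (forall b, 0 < #|[set a | indicator_mx c a b == 1%R]|)%N ->
  forall b, exists a, c a = b.
Proof.
move=> col_gt0 b.
have /set0Pn [a] : [set a | indicator_mx c a b == 1] != set0.
  by rewrite -card_gt0.
by rewrite inE mxE pnatr_eq1 eqb1 => /eqP ->; exists a.
Qed.

Lemma mul_indicator_tr :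
  indicator_mx c *m (indicator_mx c)^T = \matrix_(a, a') (c a == c a')%:R.
Proof.
apply/matrixP => a a'; rewrite !mxE (bigD1 (c a)) //= big1 => [|b ne_b].
  by rewrite !mxE eqxx mul1r addr0 eq_sym.
by rewrite !mxE (negbTE ne_b) mul0r.
Qed.

Lemma U_of_indicator_orthonormal : (forall b, exists a, c a = b) ->
  (U_of (indicator_mx c))^T *m U_of (indicator_mx c) = 1%:M.
Proof.
move=> c_surj; apply/matrixP => b b'.
rewrite /U_of /rowsum_diag_invsqrt mul_indicator_tr mul_diag_mx !mxE.
pose N x := \sum_a' (x == c a')%:R : R.
transitivity (\sum_a (b == b')%:R * ((b == c a)%:R / N b)).
  apply: eq_bigr => a _; rewrite !mxE.
  under eq_bigr => a' _ do rewrite mxE; rewrite -/(N (c a)).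
  case: (eqVneq (c a) b) => [<- | _] /=; last by rewrite !(mul0r, mulr0).
  rewrite mulr1 mul1r mulrCA mulrA -invfM -expr2 sqr_sqrtr.
    by rewrite eq_sym mulrC.
  by apply: sumr_ge0 => a' _; apply: ler0n.
rewrite -mulr_sumr -mulr_suml divff ?mulr1 //.
have [a0 <-] := c_surj b.
by rewrite /N -natr_sum pnatr_eq0 (bigD1 a0) //= eqxx.
Qed.

End Indicator.

Lemma partial_perm_mx_eq (T : eqType) (p q : nat)
    (f : 'I_p -> T) (g : 'I_q -> T) :
  injective f -> injective g ->
  partial_perm_mx (\matrix_(k, k') (f k == g k')%:R : 'M[R]_(p, q)).
Proof.
move=> f_inj g_inj; split; [|split].
- by move=> k k'; rewrite mxE; case: (f k == g k'); rewrite /is01 eqxx ?orbT.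
- move=> k; apply/card_le1_eqP => x y.
  rewrite !inE !mxE !pnatr_eq1 !eqb1.
  by move=> /eqP fx /eqP fy; apply: g_inj; rewrite -fx -fy.
- move=> k'; apply/card_le1_eqP => x y.
  rewrite !inE !mxE !pnatr_eq1 !eqb1.
  by move=> /eqP fx /eqP fy; apply: f_inj; rewrite fx fy.
Qed.

End IndicatorMatrix.

Section NormalizedMatrices.
Variables (R : rcfType) (l m : nat).

Lemma is01_ge0 (x : R) : is01 x -> 0 <= x.
Proof. by case/orP => /eqP ->; rewrite ?ler01. Qed.

Lemma rowsum01_gt0 (A : 'M[R]_l) : (forall a b, is01 (A a b)) ->
  (forall a, A a a = 1) -> forall a, 0 < \sum_b A a b.
Proof.
move=> A01 A_diag a; rewrite (bigD1 a) //= A_diag.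
by rewrite ltr_pwDl ?ltr01 //; apply: sumr_ge0 => b _; apply: is01_ge0.
Qed.

Lemma lap_nrmE (A : 'M[R]_l) : (forall a, 0 < \sum_b A a b) ->
  lap_nrm A = 1%:M - nrm A.
Proof.
move=> rowsum_gt0; rewrite /lap_nrm /nrm mulmxBr mulmxBl; congr (_ - _).
rewrite /rowsum_diag_invsqrt /rowsum_diag !mulmx_diag -diag_const_mx.
congr diag_mx; apply/rowP => a; rewrite !mxE.
have s_gt0 := rowsum_gt0 a; set s := \sum_b A a b in s_gt0 *.
have sqrt_s_neq0 : Num.sqrt s != 0 by rewrite gt_eqF // sqrtr_gt0.
rewrite -{2}(sqr_sqrtr (ltW s_gt0)) expr2.
by rewrite mulrA mulVf // mul1r mulfV.
Qed.

Lemma frob_nrm_U_of (A : 'M[R]_l) (V : 'M[R]_(l, m)) :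
  frob (nrm (V *m V^T)) (nrm A) = \tr ((U_of V)^T *m nrm A *m U_of V).
Proof.
rewrite /frob {1}/nrm /U_of; set D := rowsum_diag_invsqrt (V *m V^T).
have trD : D^T = D by rewrite /D /rowsum_diag_invsqrt tr_diag_mx.
by rewrite !trmx_mul trmxK trD [RHS]mxtrace_mulC !mulmxA.
Qed.

Lemma mxtrace_orthonormal_subr (N : 'M[R]_l) (U : 'M[R]_(l, m)) :
  U^T *m U = 1%:M -> \tr (U^T *m (1%:M - N) *m U) = m%:R - \tr (U^T *m N *m U).
Proof.
by move=> UtU; rewrite mulmxBr mulmxBl mulmx1 UtU linearB /= mxtrace1.
Qed.

End NormalizedMatrices.

Section StackedViews.
Variables (R : rcfType) (n : nat) (msz : 'I_n -> nat) (m : nat).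
Local Notation l := (\sum_(i < n) msz i).

Lemma submxcol_indicator (c : 'I_l -> 'I_m) i :
  submxcol (indicator_mx R c) i = indicator_mx R (fun k => c (tagnat.Rank i k)).
Proof. by apply/matrixP => k b; rewrite !mxE. Qed.

Lemma in_VV_indicator (V : 'M[R]_(l, m)) : in_VV V ->
  exists c, [/\ V = indicator_mx R c, forall b, exists a, c a = b &
    forall i, injective (fun k : 'I_(msz i) => c (tagnat.Rank i k))].
Proof.
case=> lift col_gt0; have [c V_c] : exists c, V = indicator_mx R c.
  apply: indicator_mxP => [a b | a];
    have [V01 [row1 _]] := lift (tagnat.sig1 a).
    by have := V01 (tagnat.sig2 a) b; rewrite mxE tagnat.sig2K.
  have := row1 (tagnat.sig2 a).
  by under eq_finset => b do rewrite mxE tagnat.sig2K.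
exists c; split=> //.
  by apply: (@indicator_col_surjective R); rewrite -V_c.
move=> i; have [_ [_ col1]] := lift i; apply: (@indicator_col_injective R).
by rewrite -submxcol_indicator -V_c.
Qed.

Lemma in_VV_feas1 (V : 'M[R]_(l, m)) : in_VV V -> feas1 V.
Proof.
move=> V_VV; split=> //; have [c [-> _ c_inj]] := in_VV_indicator V_VV => i j.
have -> : submxblock (indicator_mx R c *m (indicator_mx R c)^T) i j =
    \matrix_(k, k') (c (tagnat.Rank i k) == c (tagnat.Rank j k'))%:R.
  by apply/matrixP => k k'; rewrite mul_indicator_tr !mxE.
exact: partial_perm_mx_eq.
Qed.

Lemma in_UU_orthonormal (U : 'M[R]_(l, m)) : in_UU U -> U^T *m U = 1%:M.
Proof.
case=> V [/in_VV_indicator [c [-> c_surj _]] ->].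
exact: U_of_indicator_orthonormal.
Qed.

Lemma submxblock_diag1 (A : 'M[R]_l) :
  (forall i, submxblock A i i = 1%:M) -> forall a, A a a = 1.
Proof.
move=> A_diag a; pose k := tagnat.sig2 a.
have := congr1 (fun B : 'M_(msz (tagnat.sig1 a)) => B k k) (A_diag _).
by rewrite !mxE tagnat.sig2K eqxx.
Qed.

Lemma obj2_U_of (Pt : 'M[R]_l) (V : 'M[R]_(l, m)) :
  (forall a, 0 < \sum_b Pt a b) -> in_VV V ->
  obj2 Pt (U_of V) = m%:R - obj1 Pt V.
Proof.
move=> rowsum_gt0 V_VV; rewrite /obj2 /obj1 frob_nrm_U_of lap_nrmE //.
by rewrite mxtrace_orthonormal_subr //; apply: in_UU_orthonormal; exists V.
Qed.

End StackedViews.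

Theorem proposition2 (R : rcfType) (n : nat) (msz : 'I_n -> nat) (m : nat)
    (Pt : 'M[R]_(\sum_(i < n) msz i))
    (Pt01 : forall a b, is01 (Pt a b))
    (Pt_diag : forall i, (submxblock Pt i i : 'M[R]_(msz i, msz i)) = 1%:M) :
  (forall V : 'M[R]_(\sum_(i < n) msz i, m),
      in_VV V -> (opt1 Pt V <-> opt2 Pt (U_of V))) /\
  (forall U : 'M[R]_(\sum_(i < n) msz i, m), in_UU U -> U^T *m U = 1%:M).
Proof.
have obj2E := obj2_U_of (rowsum01_gt0 Pt01 (submxblock_diag1 Pt_diag)).
split=> [V V_VV|]; last exact: in_UU_orthonormal.
split=> [[_ V_max] | [_ U_min]].
- split=> [|_ [V' [V'_VV ->]]]; first by exists V.
  by rewrite !obj2E // lerD2l lerN2; apply/V_max/in_VV_feas1.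
- split=> [|V' [V'_VV _]]; first exact: in_VV_feas1.
  have := U_min _ (ex_intro _ V' (conj V'_VV erefl)).
  by rewrite !obj2E // lerD2l lerN2.
Qed.
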